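(* Let $k>t+1$, $n>2k-t$, and let $\mathcal{S}_p$ be a maximal set of $k$-spaces in $\mathrm{PG}(n,q)$ pairwise intersecting in at least a $t$-space. Let $\psi(\mathcal{S}_p)=\min\{\dim T: T\text{ a subspace},\ \dim(T\cap\alpha)\geq t\ \forall\alpha\in\mathcal{S}_p\}$. If $\psi(\mathcal{S}_p)=t+x$ with $x\geq 2$, then \[|\mathcal{S}_p|\leq(\theta_{k-t})^x\left[{n-t-x\atop k-t-x}\right]_q\left[{t+x+1\atop t+1}\right]_q.\]
   Context: Dimensions are projective; $\left[{n\atop k}\right]_q=\frac{(q^n-1)\cdots(q^{n-k+1}-1)}{(q^k-1)\cdots(q-1)}$ for $k>0$, $=1$ for $k=0$; $\theta_m=\frac{q^{m+1}-1}{q-1}$. Maximal means no further $k$-space can be added keeping the property. *)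

From HB Require Import structures.
From mathcomp Require Import all_boot all_order all_algebra all_field.
Set Implicit Arguments. Unset Strict Implicit. Unset Printing Implicit Defensive.
Import GRing.Theory.
Local Open Scope ring_scope.
Import VectorInternalTheory.

(* Subspaces of F^m (m = n+1 gives PG(n, #|F|)) form a finite type when F is finite. *)
HB.instance Definition _ (F : finFieldType) (m : nat) :=
  [Finite of {vspace 'rV[F]_m} by <:].

(* Projective dimension of a vector subspace: pdim U = \dim U - 1 (as an int,
   so the empty space has projective dimension -1). *)
Definition pdim (F : finFieldType) (m : nat) (U : {vspace 'rV[F]_m}) : int :=
  (\dim U)%:Z - 1.

Definition qbinom (q n k : nat) : nat :=
  ((\prod_(i < k) (q ^ (n - i) - 1)) %/ (\prod_(i < k) (q ^ (i.+1) - 1)))%N.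

Definition theta (q m : nat) : nat := ((q ^ m.+1 - 1) %/ (q - 1))%N.

Definition t_intersecting (F : finFieldType) (m : nat) (k t : int)
  (S : {set {vspace 'rV[F]_m}}) : Prop :=
  (forall a, a \in S -> pdim a = k) /\
  (forall a b, a \in S -> b \in S -> t <= pdim (a :&: b)%VS).

Definition maximal_t_intersecting (F : finFieldType) (m : nat) (k t : int)
  (S : {set {vspace 'rV[F]_m}}) : Prop :=
  t_intersecting k t S /\
  (forall b, b \notin S -> ~ t_intersecting k t (b |: S)).

Definition t_blocking (F : finFieldType) (m : nat) (t : int)
  (S : {set {vspace 'rV[F]_m}}) (T : {vspace 'rV[F]_m}) : Prop :=
  forall a, a \in S -> t <= pdim (T :&: a)%VS.

Definition psi_eq (F : finFieldType) (m : nat) (t : int)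
  (S : {set {vspace 'rV[F]_m}}) (d : int) : Prop :=
  (exists T, t_blocking t S T /\ pdim T = d) /\
  (forall T, t_blocking t S T -> d <= pdim T).

From HB Require Import structures.
From mathcomp Require Import all_boot all_order all_algebra all_field.
From mathcomp Require Import zify.
Import GRing.Theory Num.Theory.
Set Implicit Arguments. Unset Strict Implicit. Unset Printing Implicit Defensive.

(* Count in vector dimensions: members of S have dimension k+1 and pairwise
   meet in dimension >= t+1, and psi(S) = t+x says that every subspace of
   dimension < t+1+x meets some member b of S in dimension e < t+1.  If s has
   dimension t+1+i with i < x, every member of S through s contains s + U for
   one of the at most [k+1-e choose t+1-e]_q <= theta_(k-t)^(t+1-e)
   (t+1)-subspaces U of b containing s :&: b, and s + U has dimension
   t+1+i+(t+1-e).  Iterating until the dimension reaches t+1+x, where at most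
   [n-t-x choose k-t-x]_q members pass, bounds the members through any
   (t+1)-space by theta_(k-t)^x [n-t-x choose k-t-x]_q; overshooting t+1+x is
   harmless because theta_(k-t)^r [M-r choose L-r]_q <= [M choose L]_q when
   M >= L + k-t+1, which is where n > 2k-t is used.  Finally every member of S
   contains one of the [t+x+1 choose t+1]_q (t+1)-subspaces of a blocking
   space of dimension t+1+x. *)

Definition qbinom_num q c d := \prod_(i < d) (q ^ (c - i) - 1).
Definition qbinom_den q d := \prod_(i < d) (q ^ i.+1 - 1).

Lemma qbinom_den_gt0 q d : 1 < q -> 0 < qbinom_den q d.
Proof.
move=> q_gt1; rewrite prodn_gt0 // => i.
by rewrite subn_gt0 -{1}(expn0 q) ltn_exp2l.
Qed.

Lemma qbinom_num_diag q d : qbinom_num q d d = qbinom_den q d.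
Proof.
rewrite /qbinom_num (reindex_inj rev_ord_inj); apply: eq_bigr => i _.
by rewrite subKn.
Qed.

Lemma prod_subn_exp q c d : 0 < q ->
  \prod_(i < d) (q ^ c - q ^ i) = (\prod_(i < d) q ^ i) * qbinom_num q c d.
Proof.
move=> q_gt0; rewrite -big_split; apply: eq_bigr => i _ /=.
rewrite mulnBr muln1 -expnD; case: (leqP i c) => [le_ic | lt_ci].
  by rewrite subnKC.
have /eqP -> : c - i == 0 by rewrite subn_eq0 ltnW.
by apply/eqP; rewrite addn0 subnn subn_eq0 leq_pexp2l // ltnW.
Qed.

Section ThetaArith.
Variable q : nat.
Hypothesis q_gt1 : 1 < q.

Lemma theta_mul_subn1 c : theta q c * (q - 1) = q ^ c.+1 - 1.
Proof. by rewrite /theta !subn1 predn_exp mulKn 1?mulnC // -subn1 subn_gt0. Qed.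

Lemma theta_le_exp s : theta q s <= q ^ s.+1.
Proof.
rewrite -(leq_pmul2r (_ : 0 < q - 1)) ?subn_gt0 // theta_mul_subn1.
by apply: leq_trans (leq_subr 1 _) _; rewrite leq_pmulr // subn_gt0.
Qed.

Lemma subn1_exp_le_theta c i : q ^ (c + i.+1) - 1 <= theta q c * (q ^ i.+1 - 1).
Proof.
rewrite -(leq_pmul2r (_ : 0 < q - 1)) ?subn_gt0 // mulnAC theta_mul_subn1.
have ineq Q X Y : 1 < Q -> 0 < X -> 0 < Y ->
    (Q * X * Y - 1) * (Q - 1) <= (Q * X - 1) * (Q * Y - 1).
  by case: Q X Y => [|[|p]] [|a] [|b] //= _ _ _; rewrite !subn1 /=; nia.
rewrite expnD !expnS mulnCA mulnA.
by apply: ineq => //; rewrite expn_gt0 ltnW.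
Qed.

Lemma theta_mul_subn1_exp_le s L M : s.+1 + L <= M ->
  theta q s * (q ^ L - 1) <= q ^ M - 1.
Proof.
move=> le_sL_M.
have le_exp : q ^ s.+1 * q ^ L <= q ^ M by rewrite -expnD leq_pexp2l // ltnW.
have := theta_le_exp s; have : 0 < q ^ L by rewrite expn_gt0 ltnW.
move: le_exp; move: (theta q s) (q ^ s.+1) (q ^ L) (q ^ M) => T X Y Z; nia.
Qed.

End ThetaArith.

Lemma card_le_sum_cover (X Y : finType) (A : {set X}) (B : {set Y})
    (R : X -> Y -> bool) :
  {in A, forall a, exists2 y, y \in B & R a y} ->
  #|A| <= \sum_(y in B) #|[set a in A | R a y]|.
Proof.
move=> covered.
have -> : \sum_(y in B) #|[set a in A | R a y]| =
          \sum_(y in B) \sum_(a in A) R a y.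
  apply: eq_bigr => y _; rewrite -sum1_card big_mkcond [RHS]big_mkcond /=.
  by apply: eq_bigr => a _; rewrite inE; case: (a \in A); case: (R a y).
rewrite exchange_big /= -sum1_card; apply: leq_sum => a aA.
by have [y yB Ray] := covered a aA; rewrite (bigD1 y) //= Ray leq_addr.
Qed.

Section SubspaceCounting.
Variables (F : finFieldType) (m : nat).
Local Notation vT := 'rV[F]_m.
Local Notation q := #|F|.

Definition free_tuples (C : {vspace vT}) d :=
  [set s : d.-tuple vT | free s && (<<s>> <= C)%VS].

Definition subspaces (C : {vspace vT}) d :=
  [set U : {vspace vT} | (U <= C)%VS && (\dim U == d)].

Definition between (A B : {vspace vT}) d :=
  [set U : {vspace vT} | [&& (A <= U)%VS, (U <= B)%VS & \dim U == d]].

Lemma card_vspace_diff (C U : {vspace vT}) : (U <= C)%VS ->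
  #|[set v : vT | (v \in C) && (v \notin U)]| = q ^ \dim C - q ^ \dim U.
Proof.
move=> sUC; rewrite -!card_vspace.
have -> : [set v : vT | (v \in C) && (v \notin U)] = [set v in C] :\: [set v in U].
  by apply/setP => v; rewrite !inE andbC.
rewrite cardsD (setIidPr _) ?cardsE //.
by apply/subsetP => v; rewrite !inE; exact: (subvP sUC).
Qed.

Lemma free_tuples_cons (C : {vspace vT}) d v (s : d.-tuple vT) :
  ([tuple of v :: s] \in free_tuples C d.+1) =
  [&& s \in free_tuples C d, v \in C & v \notin <<s>>%VS].
Proof.
rewrite !inE /= free_cons span_cons subv_add -memvE.
by case: (free s); case: (v \in C); case: (<<s>> <= C)%VS; case: (v \in <<s>>%VS).
Qed.

Lemma card_free_tuplesS C d :
  #|free_tuples C d.+1| = #|free_tuples C d| * (q ^ \dim C - q ^ d).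
Proof.
rewrite -sum1_card.
rewrite (partition_big (@behead_tuple d.+1 vT) (mem (free_tuples C d))) /=;
  last by move=> t; rewrite [t in t \in _]tuple_eta free_tuples_cons => /andP[].
rewrite -sum_nat_const; apply: eq_bigr => s s_free; rewrite sum1_card.
move: (s_free); rewrite inE => /andP[/eqP dim_s sub_sC].
rewrite size_tuple in dim_s.
rewrite -[X in _ = _ - q ^ X]dim_s -card_vspace_diff //.
have cons_inj : injective (fun v => [tuple of v :: s]).
  by move=> v w /(congr1 val) [].
rewrite -(card_imset _ cons_inj); apply: eq_card => t; rewrite [LHS]unfold_in /=.
apply/andP/imsetP => [[t_free /eqP <-] | [v]].
  exists (thead t); last exact: tuple_eta.
  rewrite inE; move: t_free.
  by rewrite [t in t \in _]tuple_eta free_tuples_cons => /and3P[_ -> ->].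
rewrite inE => /andP[vC vs] ->; rewrite free_tuples_cons s_free vC vs.
by split=> //; apply/eqP/val_inj.
Qed.

Lemma card_free_tuples C d :
  #|free_tuples C d| = \prod_(i < d) (q ^ \dim C - q ^ i).
Proof.
elim: d => [|d IHd]; last by rewrite card_free_tuplesS IHd big_ord_recr.
rewrite big_ord0 (_ : free_tuples C 0 = setT) ?cardsT ?card_tuple //.
by apply/setP => s; rewrite !inE tuple0 /free span_nil dimv0 sub0v.
Qed.

Lemma card_free_tuples_span C d :
  #|free_tuples C d| = #|subspaces C d| * \prod_(i < d) (q ^ d - q ^ i).
Proof.
rewrite -sum1_card (partition_big (fun s : d.-tuple vT => <<s>>%VS)
                                  (mem (subspaces C d))); last first.
  by move=> s; rewrite !inE => /andP[/eqP dim_s ->]; rewrite dim_s size_tuple /=.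
rewrite -sum_nat_const; apply: eq_bigr => U.
rewrite !inE => /andP[sUC /eqP dim_U].
rewrite sum1_card -dim_U -card_free_tuples; apply: eq_card => s.
rewrite [LHS]unfold_in /= !inE.
apply/andP/andP => [[/andP[s_free _] /eqP span_s] | [s_free sU]].
  by rewrite span_s subvv.
have dim_s : \dim <<s>> = \dim U by rewrite (eqP s_free) size_tuple.
by rewrite s_free (subv_trans sU sUC) eqEdim sU dim_s leqnn.
Qed.

Lemma card_subspaces_mul C d :
  #|subspaces C d| * qbinom_den q d = qbinom_num q (\dim C) d.
Proof.
have q_gt0 : 0 < q by apply: ltnW; exact: finNzRing_gt1.
have /eqP := card_free_tuples_span C d.
rewrite card_free_tuples !prod_subn_exp // qbinom_num_diag mulnCA eqn_pmul2l.
  by move/eqP.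
by rewrite prodn_gt0 // => i; rewrite expn_gt0 q_gt0.
Qed.

Lemma card_subspaces C d : #|subspaces C d| = qbinom q (\dim C) d.
Proof.
rewrite /qbinom -/(qbinom_num q _ d) -/(qbinom_den q d) -card_subspaces_mul.
by rewrite mulnK // qbinom_den_gt0 // finNzRing_gt1.
Qed.

Lemma card_between_le A B d :
  #|between A B d| <= qbinom q (\dim B - \dim A) (d - \dim A).
Proof.
have [sAB | nsAB] := boolP (A <= B)%VS; last first.
  rewrite (_ : between A B d = set0) ?cards0 //; apply/setP => U; rewrite !inE.
  by apply: contraNF nsAB => /and3P[sAU sUB _]; exact: subv_trans sAU sUB.
(* U |-> C :&: U, for a complement C of A in B, embeds [between A B d] into
   the (d - dim A)-subspaces of C. *)
set C := (B :\: A)%VS.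
have capBA : (B :&: A = A)%VS by apply/capv_idPr.
have addCA : (C + A = B)%VS by rewrite /C -{2}capBA addv_diff_cap.
have dim_C : \dim C = \dim B - \dim A.
  by rewrite -(dimv_cap_compl B A) capBA addKn.
have between_split U : U \in between A B d ->
    (A + (C :&: U) = U)%VS /\ \dim (C :&: U) = d - \dim A.
  rewrite inE => /and3P[sAU sUB /eqP dim_U]; split.
    by rewrite vspace_modl // addvC addCA; apply/capv_idPr.
  have addCU : (C + U = B)%VS.
    by apply/eqP; rewrite eqEsubv subv_add sUB diffvSl -{1}addCA addvS.
  have := dimv_sum_cap C U; rewrite addCU dim_C dim_U.
  by have := dimvS sAU; have := dimvS sUB; rewrite dim_U; lia.
rewrite -dim_C -card_subspaces -(card_in_imset (f := fun U => (C :&: U)%VS)).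
  apply: subset_leq_card; apply/subsetP => _ /imsetP[U U_between ->].
  have [_ dim_CU] := between_split U U_between.
  by rewrite inE capvSl dim_CU /=.
move=> U1 U2 /between_split[def_U1 _] /between_split[def_U2 _] /= eq_CU.
by rewrite -def_U1 -def_U2 eq_CU.
Qed.

Lemma between_nonempty A B d : (A <= B)%VS -> \dim A <= d -> d <= \dim B ->
  exists U, U \in between A B d.
Proof.
move=> sAB; elim: d => [|d IHd] le_Ad le_dB.
  by exists A; rewrite inE subvv sAB -leqn0.
have [eq_Ad | ne_Ad] := eqVneq (\dim A) d.+1.
  by exists A; rewrite inE subvv sAB eq_Ad /=.
have [|U] := IHd _ (ltnW le_dB); first by rewrite -ltnS ltn_neqAle ne_Ad.
rewrite inE => /and3P[sAU sUB /eqP dim_U].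
have [v vB vU] : exists2 v, v \in B & v \notin U.
  by apply/subvPn; apply/negP => /dimvS; rewrite dim_U; lia.
have sUUv := addvSl U <[v]>.
have vUv : v \in (U + <[v]>)%VS by rewrite memvE addvSr.
have lt_U_Uv : \dim U < \dim (U + <[v]>).
  have /leqifP := dimv_leqif_sup sUUv; case: ifP => // sUvU.
  by rewrite (subvP sUvU _ vUv) in vU.
have le_Uv_U : \dim (U + <[v]>) <= (\dim U).+1.
  by have := dimv_sum_cap U <[v]>; rewrite dim_vline; lia.
exists (U + <[v]>)%VS.
rewrite inE (subv_trans sAU sUUv) subv_add sUB -memvE vB /=.
by apply/eqP; lia.
Qed.

Lemma dim_addv_between (s b U : {vspace vT}) d : U \in between (s :&: b) b d ->
  \dim (s + U) + \dim (s :&: b) = \dim s + d.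
Proof.
rewrite inE => /and3P[sU sUb /eqP dim_U].
have -> : (s :&: b = s :&: U)%VS.
  by apply/eqP; rewrite eqEsubv subv_cap capvSl sU (capvS (subvv s) sUb).
by rewrite dimv_sum_cap dim_U.
Qed.

Lemma card_le_sum_between (P : {set {vspace vT}}) A B d :
  (A <= B)%VS -> \dim A <= d ->
  {in P, forall a, (A <= a)%VS /\ d <= \dim (a :&: B)} ->
  #|P| <= \sum_(U in between A B d) #|[set a in P | (U <= a)%VS]|.
Proof.
move=> sAB le_Ad meet_P; apply: card_le_sum_cover => a /meet_P[sAa le_d_aB].
have sA_aB : (A <= a :&: B)%VS by rewrite subv_cap sAa.
have [U] := between_nonempty sA_aB le_Ad le_d_aB.
rewrite inE => /and3P[sAU sU_aB dim_U]; exists U.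
  by rewrite inE sAU (subv_trans sU_aB (capvSr _ _)).
exact: subv_trans sU_aB (capvSl _ _).
Qed.

End SubspaceCounting.

(* The number of K-subspaces of an N-dimensional space over a field of order
   q that contain a given d-subspace. *)
Definition supspace_count q N K d :=
  if d <= K then qbinom q (N - d) (K - d) else 0.

Section QBinomialBounds.
Variable F : finFieldType.
Local Notation q := #|F|.

Let q_gt1 : 1 < q. Proof. exact: finNzRing_gt1. Qed.

(* [qbinom] is defined by truncated division; counting subspaces shows that
   the division is exact. *)
Lemma qbinom_mul_den a b : qbinom q a b * qbinom_den q b = qbinom_num q a b.
Proof.
have := card_subspaces_mul (fullv : {vspace 'rV[F]_a}) b.
by rewrite card_subspaces dimvf dim_matrix mul1r.
Qed.

Lemma qbinom_le_theta_exp c j : qbinom q (c + j) j <= theta q c ^ j.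
Proof.
rewrite -(leq_pmul2r (qbinom_den_gt0 j q_gt1)) qbinom_mul_den.
rewrite /qbinom_num /qbinom_den.
have -> : theta q c ^ j = \prod_(i < j) theta q c.
  by rewrite prod_nat_const card_ord.
rewrite -big_split (reindex_inj rev_ord_inj) /=.
apply: leq_prod => i _; rewrite (_ : c + j - (j - i.+1) = c + i.+1).
  exact: subn1_exp_le_theta.
by have := ltn_ord i; lia.
Qed.

Lemma theta_qbinom_le_qbinomS s M L : s.+1 + L <= M ->
  theta q s * qbinom q M L <= qbinom q M.+1 L.+1.
Proof.
move=> le_sL_M.
rewrite -(leq_pmul2r (qbinom_den_gt0 L.+1 q_gt1)) qbinom_mul_den.
have -> : qbinom_den q L.+1 = qbinom_den q L * (q ^ L.+1 - 1).
  by rewrite /qbinom_den big_ord_recr.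
have -> : qbinom_num q M.+1 L.+1 = (q ^ M.+1 - 1) * qbinom_num q M L.
  by rewrite /qbinom_num big_ord_recl subn0; congr (_ * _).
rewrite -qbinom_mul_den.
have key : theta q s * (q ^ L.+1 - 1) <= q ^ M.+1 - 1.
  by apply: theta_mul_subn1_exp_le; lia.
apply: leq_trans (leq_mul key (leqnn (qbinom q M L * qbinom_den q L))).
move: (theta q s) (qbinom q M L) (qbinom_den q L) (q ^ L.+1 - 1) => T b D P.
by rewrite eq_leq //; lia.
Qed.

Lemma theta_exp_qbinom_le s M L r : r <= L -> s.+1 + L <= M ->
  theta q s ^ r * qbinom q (M - r) (L - r) <= qbinom q M L.
Proof.
move=> + le_sL_M; elim: r => [|r IHr] le_rL.
  by rewrite expn0 mul1n !subn0.
apply: leq_trans (IHr (ltnW le_rL)).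
rewrite expnS -mulnA mulnCA; apply: leq_mul (leqnn _) _.
have -> : M - r = (M - r.+1).+1 by lia.
have -> : L - r = (L - r.+1).+1 by lia.
by apply: theta_qbinom_le_qbinomS; lia.
Qed.

Lemma theta_exp_supspace_count_le c N K d r : c.+1 + K <= N ->
  theta q c ^ r * supspace_count q N K (d + r) <= supspace_count q N K d.
Proof.
rewrite /supspace_count => le_cK_N; case: (leqP (d + r) K) => [le_drK | _].
  rewrite (leq_trans (leq_addr r d) le_drK) !subnDA.
  by apply: theta_exp_qbinom_le; lia.
by rewrite muln0.
Qed.

End QBinomialBounds.

Section BlockingBound.
Variables (F : finFieldType) (N : nat).
Local Notation vT := 'rV[F]_N.
Local Notation q := #|F|.
Variables (S : {set {vspace vT}}) (dk dt x : nat).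
Hypothesis dim_S : {in S, forall a, \dim a = dk}.
Hypothesis dim_capS : {in S &, forall a b, dt <= \dim (a :&: b)}.
Hypothesis small_misses : forall s : {vspace vT},
  \dim s < dt + x -> exists2 b, b \in S & \dim (s :&: b) < dt.
Hypothesis dim_ambient : (dk - dt).+1 + dk <= N.

Definition through (s : {vspace vT}) := [set a in S | (s <= a)%VS].

(* A bound on #|through s| for dim s = dt + i: below dimension dt + x each
   step towards it costs a factor theta; from there on the members through s
   are counted directly. *)
Definition bound i :=
  if i <= x then theta q (dk - dt) ^ (x - i) * supspace_count q N dk (dt + x)
  else supspace_count q N dk (dt + i).

Lemma card_through_le s : #|through s| <= supspace_count q N dk (\dim s).
Proof.
rewrite /supspace_count; case: ifP => [le_s_dk | lt_dk_s].
  have := card_between_le s fullv dk; rewrite dimvf dim_matrix mul1r.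
  apply: leq_trans.
  apply: subset_leq_card; apply/subsetP => a; rewrite !inE => /andP[aS sa].
  by rewrite sa subvf (dim_S aS) eqxx.
rewrite leqn0 cards_eq0; apply/eqP/setP => a; rewrite !inE.
by apply/negP => /andP[aS sa]; move: lt_dk_s; rewrite -(dim_S aS) (dimvS sa).
Qed.

Lemma bound_base i s : x <= i -> \dim s = dt + i -> #|through s| <= bound i.
Proof.
move=> le_xi dim_s; apply: leq_trans (card_through_le s) _.
rewrite dim_s /bound.
case: (leqP i x) => [le_ix | //].
have /eqP -> : i == x by rewrite eqn_leq le_ix le_xi.
by rewrite subnn expn0 mul1n.
Qed.

Lemma bound_step i j : i < x -> 0 < j ->
  qbinom q (dk - dt + j) j * bound (i + j) <= bound i.
Proof.
move=> lt_ix j_gt0; rewrite /bound (ltnW lt_ix).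
apply: leq_trans (leq_mul (qbinom_le_theta_exp F (dk - dt) j) (leqnn _)) _.
case: (leqP (i + j) x) => [le_ijx | lt_x_ij].
  by rewrite mulnA -expnD (_ : j + (x - (i + j)) = x - i) //; lia.
have -> : theta q (dk - dt) ^ j =
    theta q (dk - dt) ^ (x - i) * theta q (dk - dt) ^ (i + j - x).
  by rewrite -expnD; congr (_ ^ _); lia.
rewrite -mulnA leq_mul2l; apply/orP; right.
rewrite (_ : dt + (i + j) = dt + x + (i + j - x)); last by lia.
exact: theta_exp_supspace_count_le.
Qed.

Lemma card_through_cover s b : b \in S -> \dim (s :&: b) <= dt ->
  #|through s| <= \sum_(U in between (s :&: b) b dt) #|through (s + U)|.
Proof.
move=> bS le_sb_dt.
apply: leq_trans (card_le_sum_between (capvSr s b) le_sb_dt _) _.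
  move=> a; rewrite inE => /andP[aS sa].
  by split; [exact: subv_trans (capvSl s b) sa | exact: dim_capS].
apply: leq_sum => U _; apply/eq_leq/eq_card => a.
by rewrite !inE subv_add andbA.
Qed.

Lemma card_through_le_bound i s : \dim s = dt + i -> #|through s| <= bound i.
Proof.
have [r lt_xi_r] := ubnP (x - i); elim: r => // r IHr in i s lt_xi_r *.
move=> dim_s; case: (leqP x i) => [le_xi | lt_ix]; first exact: bound_base.
have [b bS lt_sb] : exists2 b, b \in S & \dim (s :&: b) < dt.
  by apply: small_misses; rewrite dim_s ltn_add2l.
have le_dt_dk : dt <= dk by have := dim_capS bS bS; rewrite capvv (dim_S bS).
set e := \dim (s :&: b) in lt_sb.
apply: leq_trans (card_through_cover bS (ltnW lt_sb)) _.
apply: (@leq_trans (\sum_(U in between (s :&: b) b dt) bound (i + (dt - e)))).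
  apply: leq_sum => U U_between; apply: IHr; first lia.
  by have := dim_addv_between U_between; rewrite -/e dim_s; lia.
have j_gt0 : 0 < dt - e by rewrite subn_gt0.
rewrite sum_nat_const; apply: leq_trans (bound_step lt_ix j_gt0).
rewrite leq_mul2r; apply/orP; right; apply: leq_trans (card_between_le _ _ _) _.
by rewrite dim_S // -/e (_ : dk - e = dk - dt + (dt - e)) //; lia.
Qed.

Lemma card_le_blocking T : {in S, forall a, dt <= \dim (T :&: a)} ->
  \dim T = dt + x -> #|S| <= qbinom q (dt + x) dt * bound 0.
Proof.
move=> T_blocks dim_T.
apply: leq_trans (card_le_sum_between (sub0v T) (_ : \dim 0 <= dt) _) _.
- by rewrite dimv0.
- by move=> a aS; rewrite sub0v capvC T_blocks.
apply: (@leq_trans (\sum_(U in between 0 T dt) bound 0)).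
  apply: leq_sum => U; rewrite inE => /and3P[_ _ /eqP dim_U].
  by apply: card_through_le_bound; rewrite dim_U addn0.
rewrite sum_nat_const leq_mul2r; apply/orP; right.
by have := card_between_le 0%VS T dt; rewrite dimv0 !subn0 dim_T.
Qed.

End BlockingBound.

Lemma small_not_blocking (F : finFieldType) m (t d : nat)
    (S : {set {vspace 'rV[F]_m}}) :
  (forall T, t_blocking t%:Z S T -> (d%:Z <= pdim T)%R) ->
  forall s, \dim s <= d -> exists2 b, b \in S & \dim (s :&: b) <= t.
Proof.
move=> psi_min s le_s_d.
case: (pickP [pred b | (b \in S) && (\dim (s :&: b) <= t)]).
  by move=> b /andP[bS le_sb]; exists b.
move=> none; have s_blocks : t_blocking t%:Z S s.
  move=> a aS; have := none a; rewrite /= aS /= => /negbT.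
  by rewrite -ltnNge /pdim; lia.
by have := psi_min s s_blocks; rewrite /pdim; lia.
Qed.

Theorem mainTheorem9 (F : finFieldType) (n k t x : nat)
  (S : {set {vspace 'rV[F]_n.+1}}) :
  (t.+1 < k)%N -> (2 * k - t < n)%N ->
  maximal_t_intersecting (k%:Z) (t%:Z) S ->
  (2 <= x)%N ->
  psi_eq (t%:Z) S ((t + x)%N%:Z) ->
  (#|S| <= theta #|F| (k - t) ^ x * qbinom #|F| (n - t - x) (k - t - x)
            * qbinom #|F| (t + x + 1) (t + 1))%N.
Proof.
move=> lt_t1_k lt_n [[pdim_S pdim_capS] _] _ [[T [T_blocks pdim_T]] psi_min].
have dim_S : {in S, forall a, \dim a = k.+1}.
  by move=> a /pdim_S; rewrite /pdim; lia.
have dim_capS : {in S &, forall a b, t.+1 <= \dim (a :&: b)}.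
  by move=> a b aS bS; have := pdim_capS a b aS bS; rewrite /pdim; lia.
have misses s : \dim s < t.+1 + x ->
    exists2 b, b \in S & \dim (s :&: b) < t.+1.
  by rewrite addSn ltnS; exact: small_not_blocking psi_min s.
have dim_ambient : (k.+1 - t.+1).+1 + k.+1 <= n.+1 by lia.
have T_meets : {in S, forall a, t.+1 <= \dim (T :&: a)}.
  by move=> a /T_blocks; rewrite /pdim; lia.
have dim_T : \dim T = t.+1 + x by move: pdim_T; rewrite /pdim; lia.
have := card_le_blocking dim_S dim_capS misses dim_ambient T_meets dim_T.
move/leq_trans; apply.
rewrite /bound leq0n subn0 /supspace_count; case: ifP => _; last by rewrite !muln0.
have -> : n.+1 - (t.+1 + x) = n - t - x by lia.
have -> : k.+1 - (t.+1 + x) = k - t - x by lia.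
by rewrite subSS mulnC addSn !addn1 leqnn.
Qed.
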